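(* Let $A=(A_1,A_2)\in SL(2,\mathbb{C})^{\times2}$ satisfy $\sigma_{12}\neq0$. If $\nu_1\neq0$, then $A$ is conjugate (by a common element) to a pair $B=(B_1,B_2)$ of the form $B_1=\begin{pmatrix}\alpha_1+i\beta_1&0\\0&\alpha_1-i\beta_1\end{pmatrix}$, $B_2=\begin{pmatrix}\alpha_2+i\beta_2&i\delta_2\\i\delta_2&\alpha_2-i\beta_2\end{pmatrix}$ with $\alpha_1^2+\beta_1^2=1$, $\alpha_2^2+\beta_2^2+\delta_2^2=1$ and $\delta_2^2=\frac{\sigma_{12}}{2\nu_1}\neq0$. If $\nu_1=0$ and $\nu_2\neq0$, the same holds with the roles of $B_1$ and $B_2$ (and of the indices $1,2$) switched. If $\nu_1=\nu_2=0$, then $A$ is conjugate to a pair $B=(B_1,B_2)$ of the form $B_1=\begin{pmatrix}\alpha_1+\lambda&i\lambda\\i\lambda&\alpha_1-\lambda\end{pmatrix}$, $B_2=\begin{pmatrix}\alpha_2-\lambda&i\lambda\\i\lambda&\alpha_2+\lambda\end{pmatrix}$ with $\alpha_1^2=\alpha_2^2=1$ and $\lambda^4=\frac{\sigma_{12}}{16}\neq0$.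
   Context: All parameters are complex. $\sigma_{12}=\mathsf{tr}(A_1A_2A_1^{-1}A_2^{-1})-2$ and $\nu_j=\frac{(\mathsf{tr}A_j)^2}{2}-2$. *)

From HB Require Import structures.
From mathcomp Require Import all_boot all_order all_algebra.
Set Implicit Arguments. Unset Strict Implicit. Unset Printing Implicit Defensive.
Import Order.TTheory GRing.Theory Num.Theory.
Local Open Scope ring_scope.

Definition mx2 (C : nzRingType) (a b c d : C) : 'M[C]_2 :=
  \matrix_(i < 2, j < 2)
    if (i == 0 :> nat) then (if (j == 0 :> nat) then a else b)
    else (if (j == 0 :> nat) then c else d).

Definition sigma12 (C : comUnitRingType) (A1 A2 : 'M[C]_2) : C :=
  \tr (A1 *m A2 *m invmx A1 *m invmx A2) - 2.

Definition nu (C : fieldType) (A : 'M[C]_2) : C := (\tr A) ^+ 2 / 2 - 2.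

Definition conj_by (C : comUnitRingType) (P A : 'M[C]_2) : 'M[C]_2 :=
  P *m A *m invmx P.

(* If nu_1 != 0 then tr A_1 != +-2, so A_1 has two distinct eigenvalues l, 1/l and is
   conjugate in SL(2) to diag(l, 1/l).  A further diagonal conjugation, which fixes A_1,
   makes the off-diagonal entries q, r of A_2 equal to some k with k^2 = q r, and every
   symmetric matrix of SL(2) reads [[a + ib, id], [id, a - ib]] with a^2 + b^2 + d^2 = 1.
   Fricke's identity tr [A, B] = x^2 + y^2 + z^2 - x y z - 2 (x = tr A, y = tr B,
   z = tr AB) then gives sigma_12 = -k^2 (l - 1/l)^2 = -2 nu_1 k^2.
   If nu_1 = nu_2 = 0, then A_j = a_j + N_j with a_j = +-1 and N_j nilpotent of rank one;
   sigma_12 != 0 forces the kernels of N_1 and N_2 to be distinct, and one conjugation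
   sends them to the lines spanned by (1, i) and (i, 1). *)

From HB Require Import structures.
From mathcomp Require Import all_boot all_order all_algebra.
From mathcomp Require Import ring.
Set Implicit Arguments. Unset Strict Implicit. Unset Printing Implicit Defensive.
Import Order.TTheory GRing.Theory Num.Theory.
Local Open Scope ring_scope.

Section Mx2.
Variable R : nzRingType.
Implicit Types a b c d : R.

Lemma mx2E (M : 'M[R]_2) : M = mx2 (M 0 0) (M 0 1) (M 1 0) (M 1 1).
Proof.
apply/matrixP => i j; rewrite mxE.
by case: i => [[|[|i]] ?] //; case: j => [[|[|j]] ?] //=; congr (M _ _); apply: val_inj.
Qed.

Lemma mx2P (M : 'M[R]_2) : exists a b c d, M = mx2 a b c d.
Proof. by exists (M 0 0), (M 0 1), (M 1 0), (M 1 1); apply: mx2E. Qed.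

Lemma mx2_mul a b c d a' b' c' d' :
  mx2 a b c d *m mx2 a' b' c' d' =
  mx2 (a * a' + b * c') (a * b' + b * d') (c * a' + d * c') (c * b' + d * d').
Proof.
apply/matrixP => i j; rewrite !mxE !big_ord_recl big_ord0 addr0 !mxE.
by case: i => [[|[|i]] ?] //; case: j => [[|[|j]] ?].
Qed.

Lemma mx2_tr a b c d : \tr (mx2 a b c d) = a + d.
Proof. by rewrite /mxtrace !big_ord_recl big_ord0 addr0 !mxE. Qed.

Lemma mx2_scalar a : a%:M = mx2 a 0 0 a.
Proof.
apply/matrixP => i j; rewrite !mxE.
by case: i => [[|[|i]] ?] //; case: j => [[|[|j]] ?].
Qed.

End Mx2.

Lemma mx2_det (R : comNzRingType) (a b c d : R) : \det (mx2 a b c d) = a * d - b * c.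
Proof.
rewrite (expand_det_row _ 0) !big_ord_recl big_ord0 addr0 /cofactor !det_mx11 !mxE /=.
by rewrite expr0 expr1 mul1r mulN1r mulrN.
Qed.

Section Conjugation.
Variable C : comUnitRingType.
Implicit Types P Q A B : 'M[C]_2.

Lemma det1_unitmx P : \det P = 1 -> P \in unitmx.
Proof. by move=> dP; rewrite unitmxE dP unitr1. Qed.

Lemma conj_by_intertwine P A B : P \in unitmx -> P *m A = B *m P -> conj_by P A = B.
Proof. by move=> uP PA; rewrite /conj_by PA mulmxK. Qed.

Lemma conj_by1 A : conj_by 1%:M A = A.
Proof. by rewrite /conj_by invmx1 mul1mx mulmx1. Qed.

Lemma conj_byM P Q A : P \in unitmx -> Q \in unitmx ->
  conj_by (Q *m P) A = conj_by Q (conj_by P A).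
Proof.
move=> uP uQ; apply: conj_by_intertwine; first by rewrite unitmx_mul uQ.
by rewrite /conj_by !mulmxA mulmxKV // mulmxKV.
Qed.

Lemma conj_by_mulmx P A B : P \in unitmx ->
  conj_by P (A *m B) = conj_by P A *m conj_by P B.
Proof. by move=> uP; rewrite /conj_by !mulmxA mulmxKV. Qed.

Lemma det_conj_by P A : P \in unitmx -> \det (conj_by P A) = \det A.
Proof.
by move=> uP; rewrite /conj_by !det_mulmx det_inv mulrAC mulrV ?mul1r.
Qed.

Lemma tr_conj_by P A : P \in unitmx -> \tr (conj_by P A) = \tr A.
Proof. by move=> uP; rewrite /conj_by mxtrace_mulC mulKmx. Qed.

Lemma invmx_sl2 (a b c d : C) : a * d - b * c = 1 ->
  invmx (mx2 a b c d) = mx2 d (- b) (- c) a.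
Proof.
move=> det1.
have AB : mx2 a b c d *m mx2 d (- b) (- c) a = 1%:M.
  by rewrite mx2_mul mx2_scalar -det1; congr mx2; ring.
have [uA _] := mulmx1_unit AB.
by rewrite -[invmx _]mulmx1 -AB mulmxA mulVmx ?mul1mx.
Qed.

Lemma sigma12_fricke A B : \det A = 1 -> \det B = 1 ->
  sigma12 A B = \tr A ^+ 2 + \tr B ^+ 2 + \tr (A *m B) ^+ 2
                - \tr A * \tr B * \tr (A *m B) - 4.
Proof.
have [a [b [c [d ->]]]] := mx2P A; have [p [q [r [s ->]]]] := mx2P B.
rewrite !mx2_det => dA dB.
rewrite /sigma12 !invmx_sl2 // !mx2_mul !mx2_tr.
set x := a + d; set y := p + s; set z := a * p + b * r + (c * q + d * s).
(* Fricke's identity holds as a polynomial identity in its homogeneous form,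
   weighted by the determinants. *)
transitivity ((p * s - q * r) * x ^+ 2 + (a * d - b * c) * y ^+ 2 + z ^+ 2
              - x * y * z - 2 * (a * d - b * c) * (p * s - q * r) - 2).
  by rewrite /x /y /z; ring.
by rewrite dA dB; ring.
Qed.

Lemma sigma12C A B : \det A = 1 -> \det B = 1 -> sigma12 B A = sigma12 A B.
Proof. by move=> dA dB; rewrite !sigma12_fricke // mxtrace_mulC; ring. Qed.

Lemma sigma12_conj P A B : P \in unitmx -> \det A = 1 -> \det B = 1 ->
  sigma12 (conj_by P A) (conj_by P B) = sigma12 A B.
Proof.
move=> uP dA dB.
by rewrite !sigma12_fricke ?det_conj_by // -conj_by_mulmx // !tr_conj_by.
Qed.

End Conjugation.

Section NumField.
Variable C : numFieldType.
Implicit Types (P A : 'M[C]_2) (l : C).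

Lemma nu_eq0 A : (nu A == 0) = (\tr A ^+ 2 == 4).
Proof.
have -> : nu A = (\tr A ^+ 2 - 4) / 2 by rewrite /nu; field.
by rewrite mulf_eq0 invr_eq0 pnatr_eq0 orbF subr_eq0.
Qed.

Lemma nu_conj P A : P \in unitmx -> nu (conj_by P A) = nu A.
Proof. by move=> uP; rewrite /nu tr_conj_by. Qed.

Lemma det_mx2_diag_inv l : l != 0 -> \det (mx2 l 0 0 l^-1) = 1.
Proof. by move=> l0; rewrite mx2_det mulfV // mulr0 subr0. Qed.

Lemma nu_diag l : l != 0 -> nu (mx2 l 0 0 l^-1) = (l - l^-1) ^+ 2 / 2.
Proof. by move=> l0; rewrite /nu mx2_tr; field. Qed.

Lemma sigma12_diag l (p q r s : C) : l != 0 -> p * s - q * r = 1 ->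
  sigma12 (mx2 l 0 0 l^-1) (mx2 p q r s) = - (q * r) * (l - l^-1) ^+ 2.
Proof.
move=> l0 dB; rewrite sigma12_fricke ?det_mx2_diag_inv ?mx2_det //.
have -> : q * r = p * s - 1 by rewrite -dB; ring.
by rewrite mx2_mul !mx2_tr; field.
Qed.

End NumField.

Section ClosedField.
Variable C : numClosedFieldType.
Implicit Types (P A B : 'M[C]_2) (l t : C).

Lemma sl2_rescale P : \det P != 0 ->
  exists2 Q, \det Q = 1 & forall A, conj_by Q A = conj_by P A.
Proof.
move=> dP; set k := sqrtC (\det P)^-1.
have k0 : k != 0 by rewrite sqrtC_eq0 invr_eq0.
exists (k *: P); first by rewrite detZ sqrtCK mulVf.
move=> A; rewrite /conj_by invmxZ ?unitmxZ ?unitfE ?unitmxE ?unitfE //.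
by rewrite -!scalemxAl -scalemxAr scalerA mulfV // scale1r.
Qed.

Lemma exists_inv_sum t : t ^+ 2 != 4 -> exists l, [/\ l != 0, l + l^-1 = t & l != l^-1].
Proof.
move=> t4; set S := sqrtC (t ^+ 2 - 4).
have S2 : S ^+ 2 = t ^+ 2 - 4 by rewrite sqrtCK.
have S0 : S != 0 by rewrite sqrtC_eq0 subr_eq0.
set l := (t + S) / 2.
have l_inv : l * (t - l) = 1 by rewrite /l; field: S2.
have l0 : l != 0 by apply: contra_eq_neq l_inv => ->; rewrite mul0r eq_sym oner_eq0.
have l_inv' : l^-1 = t - l by apply: (mulfI l0); rewrite mulfV.
have lS : l - l^-1 = S by rewrite l_inv' /l; field.
exists l; split => //; first by rewrite l_inv' addrC subrK.
by rewrite -subr_eq0 lS.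
Qed.

Lemma sl2_conj_intertwine P0 A B : \det P0 != 0 -> P0 *m A = B *m P0 ->
  exists2 P, \det P = 1 & conj_by P A = B.
Proof.
move=> dP0 P0A; have [P dP PP0] := sl2_rescale dP0.
by exists P => //; rewrite PP0; apply: conj_by_intertwine; rewrite ?unitmxE ?unitfE.
Qed.

Lemma sl2_diagonalize A l : \det A = 1 -> l != 0 -> l + l^-1 = \tr A -> l != l^-1 ->
  exists2 P, \det P = 1 & conj_by P A = mx2 l 0 0 l^-1.
Proof.
have [a [b [c [d ->]]]] := mx2P A; rewrite mx2_det mx2_tr => dA l0 trA ll.
set m := l^-1 in trA ll *; have lm : l * m = 1 by rewrite mulfV.
have lm0 : l - m != 0 by rewrite subr_eq0.
have d_eq : d = l + m - a by rewrite trA; ring.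
have bc : b * c = a * d - 1 by rewrite -dA; ring.
rewrite d_eq in bc *.
(* The rows of the conjugator are left eigenvectors of A for l and m; which two of the
   candidates (l - d, b), (c, l - a), (m - d, b), (c, m - a) are independent depends on a = m. *)
have [am|am] := eqVneq a m.
- apply: (@sl2_conj_intertwine (mx2 c (l - m) (m - l) b)); rewrite am in bc *.
  + rewrite mx2_det; have -> : c * b - (l - m) * (m - l) = (l - m) ^+ 2 by ring: bc lm.
    by rewrite expf_neq0.
  + by rewrite !mx2_mul; congr mx2; ring: bc lm.
- apply: (@sl2_conj_intertwine (mx2 (a - m) b c (m - a))).
  + rewrite mx2_det; have -> : (a - m) * (m - a) - b * c = (m - a) * (l - m) by ring: bc lm.
    by rewrite mulf_neq0 // subr_eq0 eq_sym.
  + by rewrite !mx2_mul; congr mx2; ring: bc lm.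
Qed.

Lemma conj_diag_balance l m (p q r s : C) : q != 0 -> r != 0 ->
  exists Q k, [/\ \det Q = 1, conj_by Q (mx2 l 0 0 m) = mx2 l 0 0 m,
                  conj_by Q (mx2 p q r s) = mx2 p k k s & k ^+ 2 = q * r].
Proof.
(* With u^4 = r / q the conjugated off-diagonal entries u^2 q and r / u^2 agree. *)
move=> q0 r0; set u := 4.-root (r / q).
have u0 : u != 0 by rewrite rootC_eq0 // mulf_neq0 ?invr_eq0.
have r_u : r = u ^+ 4 * q by rewrite rootCK // divfK.
have dQ := det_mx2_diag_inv u0.
have uQ := det1_unitmx dQ.
exists (mx2 u 0 0 u^-1), (u ^+ 2 * q); split => //.
- by apply: conj_by_intertwine; rewrite // !mx2_mul; congr mx2; ring.
- by apply: conj_by_intertwine; rewrite // !mx2_mul r_u; congr mx2; field.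
- by rewrite r_u; ring.
Qed.

Lemma sl2_symmetric_form (p k s : C) : p * s - k ^+ 2 = 1 ->
  exists a b d, [/\ mx2 p k k s = mx2 (a + 'i * b) ('i * d) ('i * d) (a - 'i * b),
                    a ^+ 2 + b ^+ 2 + d ^+ 2 = 1 & d ^+ 2 = - k ^+ 2].
Proof.
move=> dB; have i2 : 'i ^+ 2 = -1 :> C := sqrCi C.
exists ((p + s) / 2), (- 'i * (p - s) / 2), (- 'i * k); split.
- by congr mx2; field: i2.
- by rewrite -[RHS]dB; field: i2.
- by ring: i2.
Qed.

Definition diagonal_normal_form A1 A2 : Prop :=
  exists (P : 'M[C]_2) (a1 b1 a2 b2 d2 : C),
    [/\ \det P = 1,
        conj_by P A1 = mx2 (a1 + 'i * b1) 0 0 (a1 - 'i * b1),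
        conj_by P A2 = mx2 (a2 + 'i * b2) ('i * d2) ('i * d2) (a2 - 'i * b2) &
      [/\ a1 ^+ 2 + b1 ^+ 2 = 1,
        a2 ^+ 2 + b2 ^+ 2 + d2 ^+ 2 = 1 &
        d2 ^+ 2 = sigma12 A1 A2 / (2 * nu A1) /\ d2 ^+ 2 != 0]].

Lemma diagonal_normal_form_conj P A1 A2 : \det P = 1 -> \det A1 = 1 -> \det A2 = 1 ->
  diagonal_normal_form (conj_by P A1) (conj_by P A2) -> diagonal_normal_form A1 A2.
Proof.
move=> dP dA1 dA2 [Q [a1 [b1 [a2 [b2 [d2 [dQ QA1 QA2 eqs]]]]]]].
have uP := det1_unitmx dP; have uQ := det1_unitmx dQ.
exists (Q *m P), a1, b1, a2, b2, d2.
by rewrite det_mulmx dQ dP mulr1 !conj_byM // -(sigma12_conj uP dA1 dA2) -(nu_conj A1 uP).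
Qed.

Lemma diagonal_normal_form_symmetric l (p k s : C) :
  l != 0 -> l != l^-1 -> p * s - k ^+ 2 = 1 -> k != 0 ->
  diagonal_normal_form (mx2 l 0 0 l^-1) (mx2 p k k s).
Proof.
move=> l0 ll dB k0.
have dD : l * l^-1 - 0 ^+ 2 = 1 by rewrite mulfV // expr0n subr0.
have [a1 [b1 [d1 [E1 ab1 d1_sq]]]] := sl2_symmetric_form dD.
have d1_0 : d1 = 0 by apply/eqP; rewrite -sqrf_eq0 d1_sq expr0n oppr0.
rewrite d1_0 mulr0 expr0n addr0 in E1 ab1.
have [a2 [b2 [d2 [E2 abd2 d2_sq]]]] := sl2_symmetric_form dB.
have dB' : p * s - k * k = 1 by rewrite -expr2.
have lm0 : l - l^-1 != 0 by rewrite subr_eq0.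
exists 1%:M, a1, b1, a2, b2, d2; rewrite !conj_by1 -E1 -E2 det1; do 2 split => //.
split; last by rewrite d2_sq oppr_eq0 expf_neq0.
rewrite sigma12_diag // nu_diag // d2_sq expr2.
by move: (l - l^-1) lm0 => t t0; field.
Qed.

Lemma diagonal_normal_form_diag l B : l != 0 -> l != l^-1 -> \det B = 1 ->
  sigma12 (mx2 l 0 0 l^-1) B != 0 -> diagonal_normal_form (mx2 l 0 0 l^-1) B.
Proof.
have [p [q [r [s ->]]]] := mx2P B; rewrite mx2_det => l0 ll dB.
rewrite sigma12_diag // mulf_eq0 negb_or oppr_eq0 mulf_eq0 negb_or => /andP[/andP[q0 r0] _].
have [Q [k [dQ QD QB k_sq]]] := conj_diag_balance l l^-1 p s q0 r0.
apply: (diagonal_normal_form_conj dQ (det_mx2_diag_inv l0)); first by rewrite mx2_det.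
rewrite QD QB; apply: diagonal_normal_form_symmetric => //; first by rewrite k_sq.
by rewrite -sqrf_eq0 k_sq mulf_neq0.
Qed.

Lemma diagonal_normal_form_nu_neq0 A1 A2 : \det A1 = 1 -> \det A2 = 1 -> sigma12 A1 A2 != 0 ->
  nu A1 != 0 -> diagonal_normal_form A1 A2.
Proof.
move=> dA1 dA2 s12; rewrite nu_eq0 => trA1.
have [l [l0 trl ll]] := exists_inv_sum trA1.
have [P dP PA1] := sl2_diagonalize dA1 l0 trl ll.
have uP := det1_unitmx dP.
apply: (diagonal_normal_form_conj dP) => //; rewrite PA1.
apply: diagonal_normal_form_diag => //; first by rewrite det_conj_by.
by rewrite -PA1 sigma12_conj.
Qed.

(* a + N, where N is the rank-one nilpotent (f, -e)^T (e, f) with kernel spanned by (f, -e). *)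
Definition parabolic_mx (a e f : C) : 'M[C]_2 := mx2 (a + f * e) (f ^+ 2) (- e ^+ 2) (a - f * e).

Lemma det_parabolic_mx a e f : \det (parabolic_mx a e f) = a ^+ 2.
Proof. by rewrite mx2_det; ring. Qed.

Lemma traceless_singular_param (u v w : C) : u ^+ 2 + v * w = 0 ->
  exists e f, [/\ u = f * e, v = f ^+ 2 & w = - e ^+ 2].
Proof.
move=> uvw; have [v0|v0] := eqVneq v 0.
  move: uvw; rewrite v0 mul0r addr0 => /eqP; rewrite sqrf_eq0 => /eqP ->.
  by exists (sqrtC (- w)), 0; rewrite mul0r expr0n sqrtCK opprK.
set f := sqrtC v; have f0 : f != 0 by rewrite sqrtC_eq0.
have f_sq : f ^+ 2 = v by rewrite sqrtCK.
exists (u / f), f; split => //; first by rewrite mulrC divfK.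
have vw : v * w = - u ^+ 2 by apply/eqP; rewrite -addr_eq0 addrC uvw.
apply: (mulfI v0); rewrite vw -f_sq expr_div_n mulrN mulrCA divff ?mulr1 //.
by rewrite expf_neq0.
Qed.

Lemma parabolic_param A : \det A = 1 -> \tr A ^+ 2 = 4 ->
  exists a e f, a ^+ 2 = 1 /\ A = parabolic_mx a e f.
Proof.
have [a [b [c [d ->]]]] := mx2P A; rewrite mx2_det mx2_tr => dA trA.
have [|e [f [u_fe -> ->]]] := @traceless_singular_param ((a - d) / 2) b c.
  have -> : b * c = a * d - 1 by rewrite -dA; ring.
  have -> : ((a - d) / 2) ^+ 2 + (a * d - 1) = ((a + d) ^+ 2 - 4) / 4 by field.
  by rewrite trA subrr mul0r.
exists ((a + d) / 2), e, f; split; first by rewrite expr_div_n trA; field.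
by rewrite /parabolic_mx -u_fe; congr mx2; field.
Qed.

Lemma sigma12_parabolic a1 a2 e f g h : a1 ^+ 2 = 1 -> a2 ^+ 2 = 1 ->
  sigma12 (parabolic_mx a1 e f) (parabolic_mx a2 g h) = (g * f - h * e) ^+ 4.
Proof.
move=> a1_sq a2_sq; rewrite sigma12_fricke ?det_parabolic_mx //.
rewrite /parabolic_mx mx2_mul !mx2_tr.
ring: a1_sq a2_sq.
Qed.

Lemma conj_parabolic_pair (a1 a2 e f g h l : C) : l = (g * f - h * e) / 2 -> l != 0 ->
  exists2 P, \det P = 1 &
    conj_by P (parabolic_mx a1 e f) = mx2 (a1 + l) ('i * l) ('i * l) (a1 - l) /\
    conj_by P (parabolic_mx a2 g h) = mx2 (a2 - l) ('i * l) ('i * l) (a2 + l).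
Proof.
move=> hl l0; have i2 : 'i ^+ 2 = -1 :> C := sqrCi C.
have efgh0 : g * f - h * e != 0 by apply: contraNneq l0 => efgh; rewrite hl efgh mul0r.
(* P0 maps (f, -e) and (h, -g) to multiples of (1, i) and (i, 1), the kernels of the
   nilpotent parts of the targets. *)
pose P0 := mx2 ('i * (g + e)) ('i * (h + f)) (e - g) (f - h).
have dP0 : \det P0 != 0.
  have -> : \det P0 = 2 * 'i * (g * f - h * e) by rewrite mx2_det; ring.
  by rewrite !mulf_neq0 ?neq0Ci ?pnatr_eq0.
have uP0 : P0 \in unitmx by rewrite unitmxE unitfE.
have [P dP PP0] := sl2_rescale dP0.
exists P; rewrite // !PP0 hl.
by split; apply: conj_by_intertwine => //; rewrite /parabolic_mx !mx2_mul; congr mx2; field: i2.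
Qed.

End ClosedField.

Theorem proposition5p3 (C : numClosedFieldType) (A1 A2 : 'M[C]_2) :
  \det A1 = 1 -> \det A2 = 1 -> sigma12 A1 A2 != 0 ->
  (nu A1 != 0 ->
    exists (P : 'M[C]_2) (a1 b1 a2 b2 d2 : C),
      [/\ \det P = 1,
          conj_by P A1 = mx2 (a1 + 'i * b1) 0 0 (a1 - 'i * b1),
          conj_by P A2 = mx2 (a2 + 'i * b2) ('i * d2) ('i * d2) (a2 - 'i * b2) &
        [/\ a1 ^+ 2 + b1 ^+ 2 = 1,
          a2 ^+ 2 + b2 ^+ 2 + d2 ^+ 2 = 1 &
          d2 ^+ 2 = sigma12 A1 A2 / (2 * nu A1) /\ d2 ^+ 2 != 0]]) /\
  (nu A1 = 0 -> nu A2 != 0 ->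
    exists (P : 'M[C]_2) (a2 b2 a1 b1 d1 : C),
      [/\ \det P = 1,
          conj_by P A2 = mx2 (a2 + 'i * b2) 0 0 (a2 - 'i * b2),
          conj_by P A1 = mx2 (a1 + 'i * b1) ('i * d1) ('i * d1) (a1 - 'i * b1) &
        [/\ a2 ^+ 2 + b2 ^+ 2 = 1,
          a1 ^+ 2 + b1 ^+ 2 + d1 ^+ 2 = 1 &
          d1 ^+ 2 = sigma12 A1 A2 / (2 * nu A2) /\ d1 ^+ 2 != 0]]) /\
  (nu A1 = 0 -> nu A2 = 0 ->
    exists (P : 'M[C]_2) (a1 a2 l : C),
      [/\ \det P = 1,
          conj_by P A1 = mx2 (a1 + l) ('i * l) ('i * l) (a1 - l),
          conj_by P A2 = mx2 (a2 - l) ('i * l) ('i * l) (a2 + l) &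
        [/\ a1 ^+ 2 = 1, a2 ^+ 2 = 1 &
          l ^+ 4 = sigma12 A1 A2 / 16 /\ l ^+ 4 != 0]]).
Proof.
move=> dA1 dA2 s12; split; [|split].
- exact: diagonal_normal_form_nu_neq0.
- move=> _; rewrite -(sigma12C dA1 dA2); apply: diagonal_normal_form_nu_neq0 => //.
  by rewrite sigma12C.
- move=> /eqP + /eqP; rewrite !nu_eq0 => /eqP trA1 /eqP trA2.
  have [a1 [e [f [a1_sq E1]]]] := parabolic_param dA1 trA1.
  have [a2 [g [h [a2_sq E2]]]] := parabolic_param dA2 trA2.
  rewrite E1 E2 sigma12_parabolic // in s12 *.
  set l := (g * f - h * e) / 2.
  have l0 : l != 0.
    by rewrite mulf_neq0 ?invr_eq0 ?pnatr_eq0 //; apply: contraNneq s12 => ->; rewrite expr0n.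
  have [P dP [P1 P2]] := conj_parabolic_pair a1 a2 (erefl l) l0.
  exists P, a1, a2, l; split => //; split => //.
  by split; [rewrite /l; field | rewrite expf_neq0].
Qed.
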